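(* Let $f$ be a holomorphic quadratic self-map of $\mathbb{P}^2$ with an invariant line $\ell$ ($f(\ell)\subset\ell$), all of whose fixed points are isolated and simple. Then any three of the four fixed points of $f$ not lying on $\ell$ are not collinear.
   Context: A holomorphic quadratic self-map of $\mathbb{P}^2$ is given by three quadratic homogeneous polynomials without common nontrivial zeros; such a map with invariant line $\ell$ and isolated simple fixed points has exactly seven fixed points, three on $\ell$ and four off $\ell$. *)

(* Projective plane P^2 over an algebraically closed field
   F of characteristic 0 (numClosedFieldType), points given by nonzero
   homogeneous coordinate vectors in 'rV[F]_3. *)
From HB Require Import structures.
From mathcomp Require Import all_boot all_order all_algebra.
Set Implicit Arguments. Unset Strict Implicit. Unset Printing Implicit Defensive.
Import Order.TTheory GRing.Theory Num.Theory.
Local Open Scope ring_scope.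

Section Defs.
Variable F : numClosedFieldType.

(* A quadratic homogeneous polynomial in x0,x1,x2 is given by its coefficient
   row c on the monomials x0^2, x1^2, x2^2, x0x1, x0x2, x1x2. *)
Definition qform (c : 'rV[F]_6) (v : 'rV[F]_3) : F :=
  c 0 0 * v 0 0 ^+ 2 + c 0 1 * v 0 1 ^+ 2 + c 0 2 * v 0 2 ^+ 2
  + c 0 3 * (v 0 0 * v 0 1) + c 0 4 * (v 0 0 * v 0 2) + c 0 5 * (v 0 1 * v 0 2).

(* Directional derivative of qform c at v in direction w. *)
Definition dqform (c : 'rV[F]_6) (v w : 'rV[F]_3) : F :=
  c 0 0 * (2 * v 0 0 * w 0 0) + c 0 1 * (2 * v 0 1 * w 0 1)
  + c 0 2 * (2 * v 0 2 * w 0 2)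
  + c 0 3 * (v 0 0 * w 0 1 + w 0 0 * v 0 1)
  + c 0 4 * (v 0 0 * w 0 2 + w 0 0 * v 0 2)
  + c 0 5 * (v 0 1 * w 0 2 + w 0 1 * v 0 2).

Definition qmap (Q : 'M[F]_(3, 6)) (v : 'rV[F]_3) : 'rV[F]_3 :=
  \row_i qform (row i Q) v.

Definition dqmap (Q : 'M[F]_(3, 6)) (v w : 'rV[F]_3) : 'rV[F]_3 :=
  \row_i dqform (row i Q) v w.

(* Q defines a holomorphic self-map of P^2: no common nontrivial zero. *)
Definition holo_map (Q : 'M[F]_(3, 6)) : Prop :=
  forall v, qmap Q v = 0 -> v = 0.

Definition same_point (p q : 'rV[F]_3) : Prop := exists c : F, q = c *: p.

Definition on_line (a v : 'rV[F]_3) : Prop := \sum_(i < 3) a 0 i * v 0 i = 0.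

Definition invariant_line (Q : 'M[F]_(3, 6)) (a : 'rV[F]_3) : Prop :=
  a != 0 /\ forall v, v != 0 -> on_line a v -> on_line a (qmap Q v).

Definition fixed_point (Q : 'M[F]_(3, 6)) (p : 'rV[F]_3) : Prop :=
  p != 0 /\ exists lam : F, qmap Q p = lam *: p.

(* [p] is a simple fixed point: 1 is not an eigenvalue of the differential of
   f at [p] on the tangent space T_[p]P^2 = F^3 / <p>.  With f(p) = lam p,
   that differential is w mod p |-> (Df(p) w)/lam mod p. *)
Definition simple_fixed_point (Q : 'M[F]_(3, 6)) (p : 'rV[F]_3) : Prop :=
  p != 0 /\ exists lam : F, qmap Q p = lam *: p /\
    forall w (mu : F), dqmap Q p w - lam *: w = mu *: p -> same_point p w.

(* All fixed points are isolated: the fixed point set in P^2 is finite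
   (for the algebraic fixed-point set this is equivalent). *)
Definition fixed_points_isolated (Q : 'M[F]_(3, 6)) : Prop :=
  exists s : seq 'rV[F]_3,
    forall p, fixed_point Q p -> exists2 q, q \in s & same_point q p.

Definition collinear (p q r : 'rV[F]_3) : Prop :=
  exists a : 'rV[F]_3, [/\ a != 0, on_line a p, on_line a q & on_line a r].

End Defs.

From HB Require Import structures.
From mathcomp Require Import all_boot all_order all_algebra.
From mathcomp Require Import ring.
Set Implicit Arguments.
Unset Strict Implicit.
Unset Printing Implicit Defensive.
Import Order.TTheory GRing.Theory Num.Theory.
Local Open Scope ring_scope.

(* Suppose three fixed points p, q, r off the invariant line l
   lie on a common line L.  Write r = al p + be q with al, be nonzero.  The
   quadratic map satisfies f(x p + y q) = x^2 f(p) + y^2 f(q) + x y B with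
   B = Df(p) q, so r being fixed forces B into span(p, q): the line L is
   invariant, and on L the map reads
     [x : y] |-> [x (lam x + c1 y) : y (mu y + c2 x)].
   A point [x : y] with x y <> 0 is then fixed iff (lam - c2) x + (c1 - mu) y = 0.
   Both r and the point s = L /\ l (which is fixed, as L and l are invariant)
   satisfy this linear equation and are distinct, so c2 = lam and c1 = mu.
   But then f(x p + y q) = (lam x + mu y) (x p + y q) vanishes at
   mu p - lam q, which contradicts the absence of common zeros. *)

Section Linear2.
Variable F : fieldType.

Lemma linear2_trivial (u v x y x' y' : F) : x * y' - x' * y != 0 ->
  u * x + v * y = 0 -> u * x' + v * y' = 0 -> u = 0 /\ v = 0.
Proof.
move=> d0 e e'.
have eu : u * (x * y' - x' * y) = y' * (u * x + v * y) - y * (u * x' + v * y').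
  by ring.
have ev : v * (x * y' - x' * y) = x * (u * x' + v * y') - x' * (u * x + v * y).
  by ring.
rewrite e e' !mulr0 subr0 in eu ev.
by move/eqP: eu; move/eqP: ev; rewrite !mulf_eq0 (negPf d0) !orbF => /eqP -> /eqP.
Qed.

End Linear2.

Section LinearAlgebra.
Variable F : numClosedFieldType.

Definition lform (a v : 'rV[F]_3) : F := \sum_(i < 3) a 0 i * v 0 i.

Lemma lformD a (x y : F) p q :
  lform a (x *: p + y *: q) = x * lform a p + y * lform a q.
Proof.
rewrite /lform !mulr_sumr -big_split; apply: eq_bigr => i _; rewrite !mxE /=; ring.
Qed.

Lemma pencil_indep (p q : 'rV[F]_3) (x y : F) : p != 0 -> ~ same_point p q ->
  x *: p + y *: q = 0 -> x = 0 /\ y = 0.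
Proof.
move=> p0 npq Hxy.
have y0 : y = 0.
  apply/eqP/negP => /negP y0; apply: npq; exists (- x / y).
  apply/rowP => j; have := congr1 (fun v : 'rV[F]_3 => v 0 j) Hxy.
  rewrite !mxE => e; apply: (mulfI y0).
  have -> : y * q 0 j = - (x * p 0 j) by rewrite -[RHS]add0r -e; ring.
  by field.
split=> //; move/eqP: Hxy; rewrite y0 scale0r addr0 scaler_eq0 (negPf p0) orbF.
by move/eqP.
Qed.

Lemma pencil_coordE (p q : 'rV[F]_3) (x y x' y' : F) : p != 0 ->
  ~ same_point p q -> x *: p + y *: q = x' *: p + y' *: q -> x = x' /\ y = y'.
Proof.
move=> p0 npq e.
have : (x - x') *: p + (y - y') *: q = 0.
  by rewrite !scalerBl addrACA e addrACA !subrr addr0.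
by case/(pencil_indep p0 npq) => /subr0_eq -> /subr0_eq ->.
Qed.

Lemma collinear_pencil (p q r : 'rV[F]_3) :
  p != 0 -> ~ same_point p q -> collinear p q r ->
  exists al be : F, r = al *: p + be *: q.
Proof.
move=> p0 npq [b [b0 bp bq br]].
pose M : 'M[F]_3 := \matrix_(i < 3, j < 3) [:: p 0 j; q 0 j; r 0 j]`_i.
have /det0P [v v0 hv] : \det M == 0.
  rewrite -det_tr; apply/det0P; exists b => //.
  apply/rowP => -[[|[|[|i]]] Hi] //; rewrite !mxE /=;
    [rewrite -[RHS]bp | rewrite -[RHS]bq | rewrite -[RHS]br];
    by apply: eq_bigr => j _; rewrite !mxE.
have hc j : v 0 0 * p 0 j + v 0 1 * q 0 j + v 0 2%:R * r 0 j = 0.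
  have := congr1 (fun w : 'rV[F]_3 => w 0 j) hv.
  rewrite !mxE !big_ord_recr big_ord0 /= !mxE /= add0r => <-.
  by congr (_ * _ + _ * _ + _ * _); congr (v 0 _); apply/val_inj.
have [v2|v2] := eqVneq (v 0 2%:R) 0.
  have : v 0 0 *: p + v 0 1 *: q = 0.
    by apply/rowP => j; have := hc j; rewrite v2 !mxE mul0r addr0.
  case/(pencil_indep p0 npq) => e0 e1; case/eqP: v0.
  apply/rowP => -[[|[|[|i]]] Hi] //; rewrite mxE;
    [rewrite -[RHS]e0 | rewrite -[RHS]e1 | rewrite -[RHS]v2];
    by congr (v 0 _); apply/val_inj.
exists (- v 0 0 / v 0 2%:R), (- v 0 1 / v 0 2%:R).
apply/rowP => j; rewrite !mxE; apply: (mulfI v2).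
have -> : v 0 2%:R * r 0 j = - (v 0 0 * p 0 j + v 0 1 * q 0 j).
  by rewrite -[RHS]add0r -(hc j); ring.
by field.
Qed.

Lemma pencil_meet_line (a p q : 'rV[F]_3) (x y : F) : lform a p != 0 ->
  on_line a (x *: p + y *: q) ->
  x *: p + y *: q = (- y / lform a p) *: (lform a q *: p + (- lform a p) *: q).
Proof.
move=> P0; rewrite /on_line -/(lform a _) lformD => e.
have ex : x = - (y * lform a q) / lform a p.
  by apply: (mulIf P0); rewrite divfK // -[LHS]subr0 -e; ring.
by rewrite scalerDr !scalerA ex; congr (_ *: _ + _ *: _); field.
Qed.

Lemma qmap_pencil (Q : 'M[F]_(3, 6)) (x y : F) p q :
  qmap Q (x *: p + y *: q) =
  (x ^+ 2) *: qmap Q p + (y ^+ 2) *: qmap Q q + (x * y) *: dqmap Q p q.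
Proof. by apply/rowP => i; rewrite !mxE /qform /dqform !mxE; ring. Qed.

End LinearAlgebra.

Section PencilOfFixedPoints.
Variables (F : numClosedFieldType) (Q : 'M[F]_(3, 6)) (p q : 'rV[F]_3) (lam mu : F).
Hypotheses (p0 : p != 0) (npq : ~ same_point p q).
Hypotheses (fp : qmap Q p = lam *: p) (fq : qmap Q q = mu *: q).

Lemma qmap_fixed_pencil x y :
  qmap Q (x *: p + y *: q) =
  (x ^+ 2 * lam) *: p + (y ^+ 2 * mu) *: q + (x * y) *: dqmap Q p q.
Proof. by rewrite qmap_pencil fp fq !scalerA. Qed.

Lemma third_fixed_point_invariant (x y nu : F) : x != 0 -> y != 0 ->
  qmap Q (x *: p + y *: q) = nu *: (x *: p + y *: q) ->
  exists c1 c2 : F, dqmap Q p q = c1 *: p + c2 *: q.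
Proof.
move=> x0 y0; rewrite qmap_fixed_pencil; move: (dqmap Q p q) => B e.
exists ((nu - x * lam) / y), ((nu - y * mu) / x).
apply/rowP => j; have := congr1 (fun w : 'rV[F]_3 => w 0 j) e; rewrite !mxE => ej.
have xy0 : x * y != 0 by rewrite mulf_neq0.
apply: (mulfI xy0).
have -> : x * y * B 0 j = nu * (x * p 0 j + y * q 0 j)
    - x ^+ 2 * lam * p 0 j - y ^+ 2 * mu * q 0 j by rewrite -ej; ring.
by field; rewrite x0 y0.
Qed.

Section InvariantPencil.
Variables c1 c2 : F.
Hypothesis fpq : dqmap Q p q = c1 *: p + c2 *: q.

Lemma qmap_invariant_pencil x y :
  qmap Q (x *: p + y *: q) =
  (x * (lam * x + c1 * y)) *: p + (y * (mu * y + c2 * x)) *: q.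
Proof.
rewrite qmap_fixed_pencil fpq; apply/rowP => j; rewrite !mxE; ring.
Qed.

Lemma invariant_pencil_fixed (x y nu : F) : x != 0 -> y != 0 ->
  qmap Q (x *: p + y *: q) = nu *: (x *: p + y *: q) ->
  (lam - c2) * x + (c1 - mu) * y = 0.
Proof.
move=> x0 y0; rewrite qmap_invariant_pencil scalerDr !scalerA.
case/(pencil_coordE p0 npq) => ex ey.
have e1 : lam * x + c1 * y = nu by apply: (mulfI x0); rewrite ex mulrC.
have e2 : mu * y + c2 * x = nu by apply: (mulfI y0); rewrite ey mulrC.
by rewrite -(subrr nu) -{1}e1 -e2; ring.
Qed.

(* An invariant line l avoiding p and q meets the pencil at the point
   s = (lform a q) p - (lform a p) q, which must therefore be fixed. *)
Lemma invariant_line_meet_fixed (a : 'rV[F]_3) :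
  (forall v, v != 0 -> on_line a v -> on_line a (qmap Q v)) ->
  lform a p != 0 -> lform a q != 0 ->
  (lam - c2) * lform a q + (c1 - mu) * - lform a p = 0.
Proof.
move=> inv_l P0 Qq0; set s := lform a q *: p + (- lform a p) *: q.
have NP0 : - lform a p != 0 by rewrite oppr_eq0.
have s_on_l : on_line a s by rewrite /on_line -/(lform a _) lformD; ring.
have s0 : s != 0.
  by apply/eqP => /(pencil_indep p0 npq) [/eqP]; rewrite (negPf Qq0).
have fs := inv_l s s0 s_on_l; rewrite /s qmap_invariant_pencil in fs.
apply: (invariant_pencil_fixed Qq0 NP0).
by rewrite qmap_invariant_pencil; apply: pencil_meet_line.
Qed.

(* If f were the identity of the invariant pencil, it would have a common
   zero, namely mu p - lam q. *)
Lemma identity_pencil_not_holo :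
  holo_map Q -> c1 = mu -> c2 = lam -> False.
Proof.
move=> holo e1 e2.
have : qmap Q (mu *: p + (- lam) *: q) = 0.
  by rewrite qmap_invariant_pencil e1 e2; apply/rowP => j; rewrite !mxE; ring.
move/holo/(pencil_indep p0 npq) => [mu0 /eqP]; rewrite oppr_eq0 => /eqP lam0.
by move/eqP: p0; apply; apply: holo; rewrite fp lam0 scale0r.
Qed.

End InvariantPencil.
End PencilOfFixedPoints.

Theorem mainTheorem7 (F : numClosedFieldType) (Q : 'M[F]_(3, 6)) (a : 'rV[F]_3) :
  holo_map Q ->
  invariant_line Q a ->
  fixed_points_isolated Q ->
  (forall p, fixed_point Q p -> simple_fixed_point Q p) ->
  forall p q r : 'rV[F]_3,
    fixed_point Q p -> fixed_point Q q -> fixed_point Q r ->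
    ~ on_line a p -> ~ on_line a q -> ~ on_line a r ->
    ~ same_point p q -> ~ same_point p r -> ~ same_point q r ->
    ~ collinear p q r.
Proof.
move=> holo [_ inv_l] _ _ p q r [p0 [lam fp]] [_ [mu fq]] [_ [nu fr]]
  /eqP P0 /eqP Qq0 nr npq npr nqr /(collinear_pencil p0 npq) [al [be er]].
subst r.
have al0 : al != 0.
  by apply/eqP => al0; apply: nqr; exists be; rewrite al0 scale0r add0r.
have be0 : be != 0.
  by apply/eqP => be0; apply: npr; exists al; rewrite be0 scale0r addr0.
have [c1 [c2 fpq]] := third_fixed_point_invariant fp fq al0 be0 fr.
have eq_r := invariant_pencil_fixed p0 npq fp fq fpq al0 be0 fr.
have eq_s := invariant_line_meet_fixed p0 npq fp fq fpq inv_l P0 Qq0.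
(* r and the point where the pencil meets l solve the same linear equation,
   and r is off l, so the system is nondegenerate. *)
have det0 : al * - lform a p - lform a q * be != 0.
  apply/eqP => e; apply: nr; rewrite /on_line -/(lform a _) lformD.
  by rewrite -[RHS]oppr0 -e; ring.
have [/subr0_eq e2 /subr0_eq e1] := linear2_trivial det0 eq_r eq_s.
exact: (identity_pencil_not_holo p0 npq fp fq fpq holo e1 (esym e2)).
Qed.
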